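(* Let $X$ be an $R$-module and $Y\le X$. Then $\mathrm{rad}_M(Y)\subseteq\mathrm{rad}_M(X)$.
   Context: $R$ is a ring with identity, modules are unital left $R$-modules, $M$ is a fixed left $R$-module. For $N\le M$ and a module $X$, $N\cdot X$ is the intersection of the kernels of all homomorphisms $X\to W$ where $W$ ranges over modules with $f(N)=0$ for all $f\in\mathrm{Hom}_R(M,W)$ (for $Z\le X$, $N\cdot Z$ is formed regarding $Z$ as a module). A proper submodule $P$ of a module $X$ is $M$-prime if for all $N\le M$, $Z\le X$, $N\cdot Z\subseteq P$ implies $N\cdot X\subseteq P$ or $Z\subseteq P$. For a module $X$, the $M$-prime radical $\mathrm{rad}_M(X)$ is the intersection of all $M$-prime submodules of $X$ if $X$ has at least one, and $\mathrm{rad}_M(X)=X$ otherwise. *)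

(* Left modules over a ring with identity R are [lmodType R]
   (R : pzRingType, so the zero ring is not excluded). *)
From HB Require Import structures.
From mathcomp Require Import all_boot all_order all_algebra.
Set Implicit Arguments. Unset Strict Implicit. Unset Printing Implicit Defensive.
Import GRing.Theory.
Local Open Scope ring_scope.

Definition is_submod (R : pzRingType) (X : lmodType R) (S : X -> Prop) : Prop :=
  S 0 /\ (forall x y, S x -> S y -> S (x + y)) /\ (forall (r : R) x, S x -> S (r *: x)).

(* R-module homomorphism Z -> W, for Z a submodule of X (Z regarded as a module):
   a map defined on X whose restriction to Z is additive and R-linear. *)
Definition hom_on (R : pzRingType) (X W : lmodType R) (Z : X -> Prop) (f : X -> W) : Prop :=
  (forall x y, Z x -> Z y -> f (x + y) = f x + f y) /\
  (forall (r : R) x, Z x -> f (r *: x) = r *: f x).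

Definition hom (R : pzRingType) (M W : lmodType R) (f : M -> W) : Prop :=
  (forall x y, f (x + y) = f x + f y) /\ (forall (r : R) x, f (r *: x) = r *: f x).

(* N . Z : intersection of the kernels of all homs Z -> W, W ranging over
   modules with f(N) = 0 for all f in Hom_R(M, W). *)
Definition mprod (R : pzRingType) (M X : lmodType R) (N : M -> Prop) (Z : X -> Prop)
  : X -> Prop :=
  fun x => Z x /\
    forall (W : lmodType R),
      (forall f : M -> W, hom f -> forall m, N m -> f m = 0) ->
      forall g : X -> W, hom_on Z g -> g x = 0.

Definition subset_of (X : Type) (A B : X -> Prop) : Prop := forall x, A x -> B x.

Definition mprime (R : pzRingType) (M X : lmodType R) (A P : X -> Prop) : Prop :=
  is_submod P /\ subset_of P A /\ (exists x, A x /\ ~ P x) /\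
  forall (N : M -> Prop) (Z : X -> Prop),
    is_submod N -> is_submod Z -> subset_of Z A ->
    subset_of (mprod N Z) P -> subset_of (mprod N A) P \/ subset_of Z P.

Definition mrad (R : pzRingType) (M X : lmodType R) (A : X -> Prop) : X -> Prop :=
  fun x =>
    ((exists P, mprime M A P) /\ (forall P, mprime M A P -> P x)) \/
    ((~ exists P, mprime M A P) /\ A x).

From HB Require Import structures.
From mathcomp Require Import all_boot all_order all_algebra.
From Stdlib Require Import Classical.

(* If X has no M-prime submodule then rad_M(X) = X and there is nothing to
   prove.  Otherwise let P be an M-prime submodule of X and x in rad_M(Y);
   we show P x.  If Y is contained in P this follows from rad_M(Y) <= Y.
   If not, the trace P /\ Y is an M-prime submodule of Y ([prime_trace]):
   it is a proper submodule of Y, and its primeness is inherited from that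
   of P because N.Z only grows when Z is enlarged to X ([mprod_mono]).
   Hence x lies in P /\ Y, since rad_M(Y) lies below every M-prime
   submodule of Y ([mrad_in_prime]). *)

Section Radical.

Context {R : pzRingType} {M X : lmodType R}.

Lemma mrad_sub (A : X -> Prop) : subset_of (mrad M A) A.
Proof.
move=> x [[[P HP] H]|[_ H]] //.
by have [_ [HPA _]] := HP; apply: HPA; apply: H.
Qed.

Lemma mrad_in_prime {A P : X -> Prop} :
  mprime M A P -> subset_of (mrad M A) P.
Proof.
move=> HP x [[_ H]|[Hn _]]; first exact: H.
by case: Hn; exists P.
Qed.

Lemma submod_meet (P Q : X -> Prop) :
  is_submod P -> is_submod Q -> is_submod (fun x => P x /\ Q x).
Proof.
move=> [P0 [PD PZ]] [Q0 [QD QZ]].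
split; first by split.
split; first by move=> x y [? ?] [? ?]; split; auto.
by move=> r x [? ?]; split; auto.
Qed.

(* N.Z is monotone in Z: a homomorphism on the larger submodule restricts
   to one on the smaller submodule, so fewer kernels are intersected. *)
Lemma mprod_mono (N : M -> Prop) (Z Z' : X -> Prop) :
  subset_of Z Z' -> subset_of (mprod N Z) (mprod N Z').
Proof.
move=> ZZ' x [Zx Hx]; split; first exact: ZZ'.
move=> W HW g [gD gZ]; apply: (Hx W HW g).
by split=> [y z Zy Zz|r y Zy]; [apply: gD | apply: gZ]; apply: ZZ'.
Qed.

Lemma prime_trace {A Y P : X -> Prop} :
  is_submod Y -> subset_of Y A -> mprime M A P -> ~ subset_of Y P ->
  mprime M Y (fun x => P x /\ Y x).
Proof.
move=> HY YA [HPsub [_ [_ Hpr]]] nYP.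
split; first exact: submod_meet.
split; first by move=> x [].
split.
  apply: NNPP => Hn; apply: nYP => x Yx; apply: NNPP => Px.
  by apply: Hn; exists x; split => // -[].
move=> N Z HN HZ ZY HNZ.
have HNZP : subset_of (mprod N Z) P by move=> x /HNZ [].
have ZA : subset_of Z A by move=> x /ZY /YA.
case: (Hpr N Z HN HZ ZA HNZP) => [HNA|HZP]; [left|right].
  move=> x HxNY; split; last by case: HxNY.
  by apply: HNA; apply: mprod_mono HxNY.
by move=> x Zx; split; [apply: HZP | apply: ZY].
Qed.

End Radical.

Theorem proposition2p28 (R : pzRingType) (M X : lmodType R) (Y : X -> Prop) :
  is_submod Y -> subset_of (mrad M Y) (mrad M (fun _ : X => True)).
Proof.
move=> HY x Hx.
case: (classic (exists P, mprime M (fun _ : X => True) P)) => Hex; last by right.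
left; split => // P HP.
case: (classic (subset_of Y P)) => HYP; first by apply: HYP; apply: mrad_sub Hx.
have HQ := prime_trace HY (fun _ _ => I) HP HYP.
by case: (mrad_in_prime HQ x Hx).
Qed.
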